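(* If $U$ is a non-empty open subset of $\mathfrak E$ (respectively of $\mathfrak E_{\mathrm c}$) that is bounded in the $\ell^2$-norm, then the boundary of $U$ in $\mathfrak E$ (respectively in $\mathfrak E_{\mathrm c}$) is not $\sigma$-compact.
   Context: $\ell^2$ is the Hilbert space of square-summable real sequences with norm $\|\cdot\|$. Erdős space is $\mathfrak E=\{x\in\ell^2:x_i\in\mathbb Q\text{ for each } i<\omega\}$ and complete Erdős space is $\mathfrak E_{\mathrm c}=\{x\in\ell^2:x_i\in\{0\}\cup\{1/n:n=1,2,3,\dots\}\text{ for each } i<\omega\}$, both with the norm topology. *)

From Stdlib Require Import Reals QArith Qreals List.
Open Scope R_scope.

Definition seqR := nat -> R.

Definition in_l2 (x : seqR) : Prop :=
  exists l, infinite_sum (fun i => (x i)^2) l.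

Definition norm_le (x : seqR) (M : R) : Prop :=
  exists l, infinite_sum (fun i => (x i)^2) l /\ sqrt l <= M.

Definition dist_lt (x y : seqR) (r : R) : Prop :=
  exists l, infinite_sum (fun i => (x i - y i)^2) l /\ sqrt l < r.

Definition Erdos (x : seqR) : Prop :=
  in_l2 x /\ forall i : nat, exists q : Q, x i = Q2R q.

Definition ErdosC (x : seqR) : Prop :=
  in_l2 x /\ forall i : nat,
    x i = 0 \/ exists n : nat, (1 <= n)%nat /\ x i = / INR n.

Definition open_in (X U : seqR -> Prop) : Prop :=
  (forall x, U x -> X x) /\
  forall x, U x -> exists e, 0 < e /\ forall y, X y -> dist_lt x y e -> U y.

Definition boundary_in (X U : seqR -> Prop) (x : seqR) : Prop :=
  X x /\ forall e, 0 < e ->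
    (exists y, X y /\ dist_lt x y e /\ U y) /\
    (exists y, X y /\ dist_lt x y e /\ ~ U y).

Definition l2_bounded (U : seqR -> Prop) : Prop :=
  exists M, forall x, U x -> norm_le x M.

Definition compact_in (X K : seqR -> Prop) : Prop :=
  (forall x, K x -> X x) /\
  forall (I : Type) (O : I -> seqR -> Prop),
    (forall i, open_in X (O i)) ->
    (forall x, K x -> exists i, O i x) ->
    exists l : list I, forall x, K x -> exists i, In i l /\ O i x.

Definition sigma_compact_in (X S : seqR -> Prop) : Prop :=
  exists K : nat -> seqR -> Prop,
    (forall n, compact_in X (K n)) /\ forall x, S x <-> exists n, K n x.

From Stdlib Require Import Reals QArith Qreals List Lia Lra ZArith.
From Stdlib Require Import Classical ClassicalEpsilon FunctionalExtensionality.
Open Scope R_scope.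

(* Suppose the boundary of U were the union of compact sets K_j.  We build finitely
   supported points p_0, p_1, ... of U, each extending the previous one.  At stage j we
   first set one new coordinate to a value 1/m small enough to stay in U, placed so far
   out that every point of K_j has a smaller squared l2-tail beyond it (compact sets have
   uniformly small tails); hence no extension of the resulting point lies in K_j.  Then we
   append coordinates 1/(j+1) one at a time; since U is bounded the point eventually
   leaves U, and we keep the last point still in U.  The coordinatewise limit x of the p_j
   is approximated in l2 both by points of U (the p_j) and by points outside U (the exit
   points), so it lies on the boundary, yet it lies in no K_j.  The argument only uses
   that the coordinate set contains 0 and every 1/n, so it covers both Erdos spaces. *)

Definition sqsum_le (x : seqR) (c : R) : Prop :=
  forall n, sum_f_R0 (fun i => x i ^ 2) n <= c.

Definition tail_from (N : nat) (x : seqR) : seqR :=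
  fun i => if (i <? N)%nat then 0 else x i.

Definition agree_below (N : nat) (x y : seqR) : Prop :=
  forall i, (i < N)%nat -> x i = y i.

Lemma sqsum_le_weaken x c c' : sqsum_le x c -> c <= c' -> sqsum_le x c'.
Proof. intros H Hc n. specialize (H n). lra. Qed.

Lemma sqsum_le_pointwise x y c :
  (forall i, x i ^ 2 <= y i ^ 2) -> sqsum_le y c -> sqsum_le x c.
Proof. intros Hxy H n. eapply Rle_trans; [apply sum_growing, Hxy | apply H]. Qed.

Lemma sqsum_le_coord x c i : sqsum_le x c -> x i ^ 2 <= c.
Proof.
  intro H. eapply Rle_trans; [| apply (H i)].
  destruct i as [|i]; [simpl; lra |]. rewrite tech5.
  pose proof (cond_pos_sum (fun k => x k ^ 2) i (fun k => pow2_ge_0 (x k))). lra.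
Qed.

Lemma sqsum_le_nonneg x c : sqsum_le x c -> 0 <= c.
Proof. intro H. pose proof (sqsum_le_coord x c 0 H). pose proof (pow2_ge_0 (x 0%nat)). lra. Qed.

Lemma sqsum_le_zero x : (forall i, x i = 0) -> sqsum_le x 0.
Proof.
  intros H n. rewrite (sum_eq _ (fun _ => 0)), sum_cte; [lra |].
  intros i _. rewrite H. ring.
Qed.

Lemma sqsum_le_single x k : (forall i, i <> k -> x i = 0) -> sqsum_le x (x k ^ 2).
Proof.
  intros H n.
  assert (Hsum : sum_f_R0 (fun i => x i ^ 2) n = if (k <=? n)%nat then x k ^ 2 else 0).
  { induction n as [|n IH].
    - cbn [sum_f_R0]. destruct (Nat.leb_spec k 0) as [Hk | Hk].
      + replace k with 0%nat by lia. reflexivity.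
      + rewrite H by lia. ring.
    - rewrite tech5, IH. destruct (Nat.eq_dec (S n) k) as [<- | Hk].
      + rewrite Nat.leb_refl. destruct (Nat.leb_spec (S n) n); [lia |]. ring.
      + rewrite (H (S n) Hk).
        destruct (Nat.leb_spec k n), (Nat.leb_spec k (S n)); try lia; ring. }
  rewrite Hsum. destruct (k <=? n)%nat; [lra | apply pow2_ge_0].
Qed.

Lemma sqsum_le_add x y a b t : 0 < t -> sqsum_le x a -> sqsum_le y b ->
  sqsum_le (fun i => x i + y i) ((1 + t) * a + (1 + / t) * b).
Proof.
  intros Ht Ha Hb n.
  assert (peter_paul : forall u v, (u + v) ^ 2 <= (1 + t) * u ^ 2 + (1 + / t) * v ^ 2).
  { intros u v.
    assert (E : (1 + t) * u ^ 2 + (1 + / t) * v ^ 2 - (u + v) ^ 2 = (t * u - v) ^ 2 / t)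
      by (field; lra).
    assert (0 <= (t * u - v) ^ 2 / t)
      by (apply Rmult_le_pos; [apply pow2_ge_0 | apply Rlt_le, Rinv_0_lt_compat, Ht]).
    lra. }
  eapply Rle_trans; [apply sum_growing; intro i; apply peter_paul |].
  replace (sum_f_R0 _ n) with ((1 + t) * sum_f_R0 (fun i => x i ^ 2) n
                               + (1 + / t) * sum_f_R0 (fun i => y i ^ 2) n)
    by (rewrite plus_sum, !scal_sum; f_equal; apply sum_eq; intros; ring).
  assert (0 < / t) by (apply Rinv_0_lt_compat, Ht).
  specialize (Ha n). specialize (Hb n). nra.
Qed.

Lemma sqsum_le_cv x c : sqsum_le x c ->
  exists l, infinite_sum (fun i => x i ^ 2) l /\ l <= c.
Proof.
  intro H.
  assert (Hg : Un_growing (sum_f_R0 (fun i => x i ^ 2)))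
    by (intro n; simpl; pose proof (pow2_ge_0 (x (S n))); lra).
  assert (Hub : has_ub (sum_f_R0 (fun i => x i ^ 2))) by (exists c; intros _ [n ->]; apply H).
  destruct (growing_cv _ Hg Hub) as [l Hl].
  exists l. split; [exact Hl |].
  apply (Rle_cv_lim (Vn := fun _ => c) H Hl).
  intros e He. exists 0%nat. intros. unfold Rdist. rewrite Rminus_diag, Rabs_R0. lra.
Qed.

Lemma sqsum_le_in_l2 x c : sqsum_le x c -> in_l2 x.
Proof. intro H. destruct (sqsum_le_cv x c H) as [l [Hl _]]. exists l. exact Hl. Qed.

Lemma norm_le_sqsum_le x M : norm_le x M -> sqsum_le x (M ^ 2).
Proof.
  intros [l [Hl HM]] n.
  assert (Hpos : forall i, 0 <= x i ^ 2) by (intro; apply pow2_ge_0).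
  pose proof (sum_incr _ n l Hl Hpos).
  pose proof (cond_pos_sum _ n Hpos).
  pose proof (sqrt_sqrt l ltac:(lra)). pose proof (sqrt_pos l). nra.
Qed.

Lemma dist_lt_of_sqsum_le x y c e : 0 < e -> c < e ^ 2 ->
  sqsum_le (fun i => x i - y i) c -> dist_lt x y e.
Proof.
  intros He Hce H. destruct (sqsum_le_cv _ c H) as [l [Hl Hlc]].
  exists l. split; [exact Hl |].
  pose proof (sum_incr _ 0 l Hl (fun i => pow2_ge_0 (x i - y i))).
  pose proof (pow2_ge_0 (x 0%nat - y 0%nat)). simpl in *.
  rewrite <- (sqrt_pow2 e) by lra. apply sqrt_lt_1_alt. lra.
Qed.

Lemma sqsum_le_of_dist_lt x y e : dist_lt x y e ->
  exists c, c < e ^ 2 /\ sqsum_le (fun i => x i - y i) c.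
Proof.
  intros [l [Hl He]]. exists l.
  assert (Hpos : forall i, 0 <= (x i - y i) ^ 2) by (intro; apply pow2_ge_0).
  pose proof (sum_incr _ 0 l Hl Hpos). pose proof (Hpos 0%nat). simpl in *.
  pose proof (sqrt_sqrt l ltac:(lra)). pose proof (sqrt_pos l).
  split; [nra |]. intro n. exact (sum_incr _ n l Hl Hpos).
Qed.

Lemma sqsum_le_tail_from N x c : sqsum_le x c -> sqsum_le (tail_from N x) c.
Proof.
  apply sqsum_le_pointwise. intro i. unfold tail_from.
  destruct (i <? N)%nat; [rewrite pow_i by lia; apply pow2_ge_0 | lra].
Qed.

Lemma sqsum_le_tail_from_le N N' x c : (N <= N')%nat ->
  sqsum_le (tail_from N x) c -> sqsum_le (tail_from N' x) c.
Proof.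
  intro HN. apply sqsum_le_pointwise. intro i. unfold tail_from.
  destruct (Nat.ltb_spec i N'), (Nat.ltb_spec i N); try lia;
    try (rewrite pow_i by lia; apply pow2_ge_0); lra.
Qed.

Lemma sum_sq_tail_from x N n :
  sum_f_R0 (fun i => tail_from (S N) x i ^ 2) n
  = sum_f_R0 (fun i => x i ^ 2) n - sum_f_R0 (fun i => x i ^ 2) (Nat.min n N).
Proof.
  unfold tail_from. induction n as [|n IH].
  - cbn [sum_f_R0 Nat.min Nat.ltb Nat.leb]. ring.
  - rewrite !tech5, IH. destruct (Nat.ltb_spec (S n) (S N)).
    + rewrite Nat.min_l, Nat.min_l by lia. rewrite tech5. ring.
    + rewrite Nat.min_r, Nat.min_r by lia. ring.
Qed.

Lemma in_l2_tail_small x eps : in_l2 x -> 0 < eps ->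
  exists N, sqsum_le (tail_from N x) eps.
Proof.
  intros [l Hl] Heps. destruct (Hl eps Heps) as [N HN].
  exists (S N). intro n. rewrite sum_sq_tail_from.
  destruct (Nat.le_gt_cases N n).
  - rewrite Nat.min_r by lia.
    pose proof (sum_incr _ n l Hl (fun i => pow2_ge_0 (x i))).
    specialize (HN N (le_n N)). unfold Rdist in HN. apply Rabs_def2 in HN. lra.
  - rewrite Nat.min_l by lia. lra.
Qed.

Lemma finite_support_in_l2 x N : (forall i, (N <= i)%nat -> x i = 0) -> in_l2 x.
Proof.
  intro Hx. apply (sqsum_le_in_l2 x (sum_f_R0 (fun i => x i ^ 2) N)). intro n.
  assert (Htail : sqsum_le (tail_from (S N) x) 0).
  { apply sqsum_le_zero. intro i. unfold tail_from.
    destruct (Nat.ltb_spec i (S N)); [reflexivity | apply Hx; lia]. }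
  specialize (Htail n). rewrite sum_sq_tail_from in Htail.
  pose proof (sum_sq_tail_from x n N) as Hmono. rewrite Nat.min_comm in Hmono.
  pose proof (cond_pos_sum (fun i => tail_from (S n) x i ^ 2) N (fun i => pow2_ge_0 _)).
  destruct (Nat.le_gt_cases n N).
  - rewrite Nat.min_l in * by lia. lra.
  - rewrite Nat.min_r in * by lia. lra.
Qed.

Lemma sqsum_le_sub_of_agree N x y a b : agree_below N x y ->
  sqsum_le (tail_from N x) a -> sqsum_le (tail_from N y) b ->
  sqsum_le (fun i => x i - y i) (2 * a + 2 * b).
Proof.
  intros Hxy Ha Hb.
  assert (Hb' : sqsum_le (fun i => - tail_from N y i) b)
    by (revert Hb; apply sqsum_le_pointwise; intro i; right; ring).
  replace (2 * a + 2 * b) with ((1 + 1) * a + (1 + / 1) * b) by (rewrite Rinv_1; ring).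
  generalize (sqsum_le_add _ _ a b 1 Rlt_0_1 Ha Hb'). apply sqsum_le_pointwise.
  intro i. right. unfold tail_from. destruct (Nat.ltb_spec i N); [rewrite Hxy by lia |]; ring.
Qed.

Lemma peter_paul_room c eps : 0 <= c < eps ->
  exists t d, 0 < t /\ 0 < d /\ (1 + t) * c + (1 + / t) * d < eps.
Proof.
  intros [Hc Hce].
  set (t := (eps - c) / (2 * (c + 1))).
  assert (Ht : 0 < t) by (unfold t; apply Rdiv_lt_0_compat; lra).
  assert (Htc : (1 + t) * c < eps).
  { unfold t. apply (Rmult_lt_reg_r (2 * (c + 1))); [lra |].
    field_simplify; [nra | lra]. }
  assert (Hit : 0 < 1 + / t) by (pose proof (Rinv_0_lt_compat t Ht); lra).
  exists t, ((eps - (1 + t) * c) / (2 * (1 + / t))).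
  split; [exact Ht | split].
  - apply Rdiv_lt_0_compat; lra.
  - replace ((1 + / t) * ((eps - (1 + t) * c) / (2 * (1 + / t))))
      with ((eps - (1 + t) * c) / 2) by (field; lra). lra.
Qed.

Lemma tail_sqsum_lt_open X N eps :
  open_in X (fun y => X y /\ exists c, c < eps /\ sqsum_le (tail_from N y) c).
Proof.
  split; [now intros y [Hy _] |].
  intros y [Hy [c [Hce Hc]]].
  destruct (peter_paul_room c eps (conj (sqsum_le_nonneg _ _ Hc) Hce)) as [t [d [Ht [Hd Htd]]]].
  exists (sqrt d). split; [apply sqrt_lt_R0, Hd |].
  intros z Hz Hyz. split; [exact Hz |].
  destruct (sqsum_le_of_dist_lt _ _ _ Hyz) as [c' [Hc'd Hc']].
  rewrite pow2_sqrt in Hc'd by lra.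
  exists ((1 + t) * c + (1 + / t) * c'). split.
  - assert (0 < / t) by (apply Rinv_0_lt_compat, Ht). nra.
  - assert (Hdiff : sqsum_le (fun i => - tail_from N (fun k => y k - z k) i) c').
    { generalize (sqsum_le_tail_from N _ _ Hc'). apply sqsum_le_pointwise.
      intro i. right. ring. }
    generalize (sqsum_le_add _ _ _ _ _ Ht Hc Hdiff). apply sqsum_le_pointwise.
    intro i. right. unfold tail_from. destruct (i <? N)%nat; ring.
Qed.

Lemma compact_tail_small X K eps : (forall y, X y -> in_l2 y) ->
  compact_in X K -> 0 < eps -> exists N, forall y, K y -> sqsum_le (tail_from N y) eps.
Proof.
  intros HX [HKX HK] Heps.
  destruct (HK nat _ (fun N => tail_sqsum_lt_open X N eps)) as [L HL].
  { intros y Hy.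
    destruct (in_l2_tail_small y (eps / 2) (HX y (HKX y Hy))) as [N HN]; [lra |].
    exists N. split; [exact (HKX y Hy) |]. exists (eps / 2). split; [lra | exact HN]. }
  exists (list_max L). intros y Hy.
  destruct (HL y Hy) as [N [HNL [_ [c [Hce Hc]]]]].
  apply (sqsum_le_tail_from_le N).
  - apply (proj1 (Forall_forall _ L) (proj1 (list_max_le L _) (le_n _)) N HNL).
  - apply (sqsum_le_weaken _ c); [exact Hc | lra].
Qed.

Definition vanishes_from (N : nat) (x : seqR) : Prop :=
  forall i, (N <= i)%nat -> x i = 0.

Definition l2_valued (P : R -> Prop) (x : seqR) : Prop :=
  in_l2 x /\ forall i, P (x i).

Definition fill (A k : nat) (v : R) (x : seqR) : seqR :=
  fun i => if ((A <? i) && (i <=? A + k))%nat then v else x i.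

Lemma agree_below_le N N' x y : (N <= N')%nat -> agree_below N' x y -> agree_below N x y.
Proof. intros HN H i Hi. apply H. lia. Qed.

Lemma agree_below_sym N x y : agree_below N x y -> agree_below N y x.
Proof. intros H i Hi. symmetry. apply H, Hi. Qed.

Lemma agree_below_trans N x y z : agree_below N x y -> agree_below N y z -> agree_below N x z.
Proof. intros Hxy Hyz i Hi. rewrite Hxy, Hyz by exact Hi. reflexivity. Qed.

Lemma inv_INR_S_pos n : 0 < / INR (S n).
Proof. apply Rinv_0_lt_compat, lt_0_INR, Nat.lt_0_succ. Qed.

Lemma inv_INR_S_small e : 0 < e -> exists n, forall j, (n <= j)%nat -> / INR (S j) < e.
Proof.
  intro He. destruct (INR_unbounded (/ e)) as [n Hn]. exists n. intros j Hj.
  assert (Hnj : INR n <= INR j) by (apply le_INR, Hj).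
  rewrite <- (Rinv_inv e). apply Rinv_lt_contravar.
  - apply Rmult_lt_0_compat; [apply Rinv_0_lt_compat, He | apply lt_0_INR; lia].
  - rewrite S_INR. lra.
Qed.

Lemma l2_valued_of_vanishes P N x : vanishes_from N x -> (forall i, P (x i)) -> l2_valued P x.
Proof. intros Hx HP. split; [exact (finite_support_in_l2 x N Hx) | exact HP]. Qed.

Lemma fill_0 A v x : fill A 0 v x = x.
Proof.
  apply functional_extensionality. intro i. unfold fill.
  destruct (Nat.ltb_spec A i), (Nat.leb_spec i (A + 0)); try lia; reflexivity.
Qed.

Lemma fill_coord P A k v x : (forall i, P (x i)) -> P v -> forall i, P (fill A k v x i).
Proof. intros Hx Hv i. unfold fill. destruct (_ && _)%bool; auto. Qed.

Lemma fill_vanishes_from A k v x :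
  vanishes_from (S A) x -> vanishes_from (S (A + k)) (fill A k v x).
Proof.
  intros Hx i Hi. unfold fill.
  destruct (Nat.leb_spec i (A + k)); [lia |]. rewrite Bool.andb_false_r. apply Hx. lia.
Qed.

Lemma fill_agree_below A k v x : agree_below (S A) (fill A k v x) x.
Proof. intros i Hi. unfold fill. destruct (Nat.ltb_spec A i); [lia | reflexivity]. Qed.

Lemma fill_S_agree_below A k v x : agree_below (S (A + k)) (fill A (S k) v x) (fill A k v x).
Proof.
  intros i Hi. unfold fill.
  destruct (Nat.leb_spec i (A + S k)), (Nat.leb_spec i (A + k)); try lia; reflexivity.
Qed.

Lemma fill_in_range A k v x i : (A < i <= A + k)%nat -> fill A k v x i = v.
Proof.
  intros Hi. unfold fill.
  destruct (Nat.ltb_spec A i), (Nat.leb_spec i (A + k)); try lia; reflexivity.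
Qed.

Lemma sum_sq_fill_ge A k v x :
  INR k * v ^ 2 <= sum_f_R0 (fun i => fill A k v x i ^ 2) (A + k).
Proof.
  set (ind := fun i => if (A <? i)%nat then v ^ 2 else 0).
  assert (Hcount : forall m, sum_f_R0 ind (A + m) = INR m * v ^ 2).
  { induction m as [|m IH].
    - rewrite Nat.add_0_r, (sum_eq _ (fun _ => 0)), sum_cte; [simpl; ring |].
      intros i Hi. unfold ind. destruct (Nat.ltb_spec A i); [lia | reflexivity].
    - rewrite Nat.add_succ_r, tech5, IH, S_INR. unfold ind.
      destruct (Nat.ltb_spec A (S (A + m))); [ring | lia]. }
  rewrite <- Hcount. apply sum_Rle. intros i Hi. unfold ind.
  destruct (Nat.ltb_spec A i).
  - rewrite fill_in_range by lia. lra.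
  - apply pow2_ge_0.
Qed.

Lemma exists_last_true (Q : nat -> Prop) : Q 0%nat -> ~ (forall k, Q k) ->
  exists k, Q k /\ ~ Q (S k).
Proof.
  intros H0 Hall. apply not_all_ex_not in Hall as [k Hk].
  induction k as [|k IH]; [contradiction |].
  destruct (classic (Q k)) as [Hq | Hq]; [now exists k | exact (IH Hq)].
Qed.

Lemma dependent_choice_nat {A : Type} (Inv : A -> Prop) (Rel : nat -> A -> A -> Prop) (a0 : A) :
  Inv a0 -> (forall j a, Inv a -> exists a', Inv a' /\ Rel j a a') ->
  exists st : nat -> A, forall j, Inv (st j) /\ Rel j (st j) (st (S j)).
Proof.
  intros H0 Hstep.
  assert (next : forall j a, {a' | Inv a -> Inv a' /\ Rel j a a'}).
  { intros j a. apply constructive_indefinite_description.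
    destruct (classic (Inv a)) as [Ha | Ha].
    - destruct (Hstep j a Ha) as [a' Ha']. now exists a'.
    - exists a. intro. contradiction. }
  set (st := fix st n := match n with 0%nat => a0 | S j => proj1_sig (next j (st j)) end).
  assert (Hinv : forall j, Inv (st j)).
  { induction j as [|j IH]; [exact H0 | exact (proj1 (proj2_sig (next j (st j)) IH))]. }
  exists st. intro j.
  split; [apply Hinv | exact (proj2 (proj2_sig (next j (st j)) (Hinv j)))].
Qed.

Lemma coherent_limit (p : nat -> seqR) (F : nat -> nat) :
  (forall j, (F j < F (S j))%nat) -> (forall j, agree_below (F j) (p (S j)) (p j)) ->
  (forall j, (j <= F j)%nat) /\ forall j, agree_below (F j) (fun i => p (S i) i) (p j).
Proof.
  intros HF Hp.
  assert (Hmono : forall j k, (j <= k)%nat -> (F j <= F k)%nat).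
  { intros j k Hjk. induction Hjk; [lia | specialize (HF m); lia]. }
  assert (Hstable : forall j k, (j <= k)%nat -> agree_below (F j) (p k) (p j)).
  { intros j k Hjk. induction Hjk as [|k Hjk IH]; [now intros i _ |].
    apply (agree_below_trans _ _ (p k)); [| exact IH].
    apply (agree_below_le _ (F k)); [exact (Hmono _ _ Hjk) | apply Hp]. }
  assert (Hge : forall j, (j <= F j)%nat)
    by (induction j as [|j IH]; [lia | specialize (HF j); lia]).
  split; [exact Hge |]. intros j i Hi. cbv beta.
  rewrite <- (Hstable (S i) (Nat.max (S i) j) ltac:(lia) i) by (specialize (Hge (S i)); lia).
  apply Hstable; lia.
Qed.

Definition tail_approx (V : seqR -> Prop) (x : seqR) : Prop :=
  forall j, exists G v, (j <= G)%nat /\ V v /\ agree_below G x v /\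
    sqsum_le (tail_from G v) ((/ INR (S j)) ^ 2).

Lemma tail_approx_dist_lt V x e : in_l2 x -> tail_approx V x -> 0 < e ->
  exists v, V v /\ dist_lt x v e.
Proof.
  intros Hx Happ He.
  destruct (in_l2_tail_small x (e ^ 2 / 8) Hx) as [N1 HN1]; [nra |].
  destruct (inv_INR_S_small (e / 3)) as [N2 HN2]; [lra |].
  set (j := Nat.max N1 N2).
  destruct (Happ j) as [G [v [HG [Hv [Hxv Htv]]]]].
  exists v. split; [exact Hv |].
  apply (dist_lt_of_sqsum_le _ _ (2 * (e ^ 2 / 8) + 2 * (/ INR (S j)) ^ 2) e He).
  - pose proof (HN2 j (Nat.le_max_r _ _)).
    pose proof (inv_INR_S_pos j). nra.
  - apply (sqsum_le_sub_of_agree G); [exact Hxv | | exact Htv].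
    apply (sqsum_le_tail_from_le N1); [lia | exact HN1].
Qed.

Lemma boundary_in_of_tail_approx X U x : X x -> in_l2 x ->
  tail_approx (fun v => X v /\ U v) x -> tail_approx (fun v => X v /\ ~ U v) x ->
  boundary_in X U x.
Proof.
  intros HXx Hx Hin Hout. split; [exact HXx |]. intros e He. split.
  - destruct (tail_approx_dist_lt _ x e Hx Hin He) as [v [[HXv HUv] Hv]]. now exists v.
  - destruct (tail_approx_dist_lt _ x e Hx Hout He) as [v [[HXv HUv] Hv]]. now exists v.
Qed.

Section Construction.

Variable P : R -> Prop.
Hypothesis P_0 : P 0.
Hypothesis P_inv_S : forall n, P (/ INR (S n)).

Local Notation X := (l2_valued P).

Variable U : seqR -> Prop.
Hypothesis U_open : open_in X U.
Variable M : R.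
Hypothesis U_bounded : forall x, U x -> norm_le x M.

Lemma U_sqsum_ball p : U p ->
  exists r, 0 < r /\ forall y c, X y -> c < r ^ 2 -> sqsum_le (fun i => p i - y i) c -> U y.
Proof.
  intro Hp. destruct (proj2 U_open p Hp) as [r [Hr Hball]].
  exists r. split; [exact Hr |]. intros y c Hy Hc Hpy.
  apply Hball; [exact Hy | exact (dist_lt_of_sqsum_le p y c r Hr Hc Hpy)].
Qed.

Definition stage (p : seqR) (F : nat) : Prop := X p /\ U p /\ vanishes_from F p.

Lemma stage_exists : (exists x, U x) -> exists p F, stage p F.
Proof.
  intros [x Hx]. destruct (U_sqsum_ball x Hx) as [r [Hr Hball]].
  destruct (in_l2_tail_small x (r ^ 2 / 2) (proj1 (proj1 U_open x Hx))) as [N HN]; [nra |].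
  set (p := fun i => if (i <? N)%nat then x i else 0).
  assert (Hvan : vanishes_from N p)
    by (intros i Hi; unfold p; destruct (Nat.ltb_spec i N); [lia | reflexivity]).
  assert (HXp : X p).
  { apply (l2_valued_of_vanishes P N p Hvan). intro i. unfold p.
    destruct (i <? N)%nat; [exact (proj2 (proj1 U_open x Hx) i) | exact P_0]. }
  exists p, N. split; [exact HXp | split; [| exact Hvan]].
  apply (Hball p (r ^ 2 / 2) HXp); [nra |].
  generalize HN. apply sqsum_le_pointwise. intro i. right.
  unfold p, tail_from. destruct (i <? N)%nat; ring.
Qed.

Lemma fill_exits_U A d q : U q -> 0 < d ->
  exists k, U (fill A k d q) /\ ~ U (fill A (S k) d q).
Proof.
  intros Hq Hd. apply (exists_last_true (fun k => U (fill A k d q))).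
  { now rewrite fill_0. }
  intro Hall.
  assert (Hd2 : 0 < d ^ 2) by (apply pow_lt, Hd).
  destruct (INR_unbounded (M ^ 2 / d ^ 2)) as [k Hk].
  pose proof (norm_le_sqsum_le _ _ (U_bounded _ (Hall k)) (A + k)%nat).
  pose proof (sum_sq_fill_ge A k d q).
  assert (M ^ 2 < INR k * d ^ 2).
  { apply (Rmult_lt_reg_r (/ d ^ 2)); [apply Rinv_0_lt_compat, Hd2 |].
    replace (INR k * d ^ 2 * / d ^ 2) with (INR k) by (field; lra). exact Hk. }
  lra.
Qed.

Lemma bump_stage K p F : compact_in X K -> stage p F ->
  exists A q, (F <= A)%nat /\ stage q (S A) /\ agree_below A q p /\
    forall x, x A = q A -> ~ K x.
Proof.
  intros HK [HXp [HUp Hp]].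
  destruct (U_sqsum_ball p HUp) as [r [Hr Hball]].
  destruct (inv_INR_S_small r Hr) as [m Hm]. specialize (Hm m (le_n m)).
  set (d := / INR (S m)). pose proof (inv_INR_S_pos m) as Hd. fold d in Hm, Hd.
  destruct (compact_tail_small X K (d ^ 2 / 2) (fun y Hy => proj1 Hy) HK) as [N HN]; [nra |].
  set (B := Nat.max F N).
  assert (HpB : vanishes_from (S B) p) by (intros i Hi; apply Hp; lia).
  assert (HqB : fill B 1 d p (S B) = d) by (apply fill_in_range; lia).
  exists (S B), (fill B 1 d p). split; [lia | split; [split; [| split] | split]].
  - apply (l2_valued_of_vanishes _ (S (B + 1))); [apply fill_vanishes_from, HpB |].
    apply fill_coord; [apply HXp | apply P_inv_S].
  - apply (Hball _ (d ^ 2)).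
    + apply (l2_valued_of_vanishes _ (S (B + 1))); [apply fill_vanishes_from, HpB |].
      apply fill_coord; [apply HXp | apply P_inv_S].
    + nra.
    + replace (d ^ 2) with ((p (S B) - fill B 1 d p (S B)) ^ 2)
        by (rewrite HqB, (HpB (S B)) by lia; ring).
      apply (sqsum_le_single (fun i => p i - fill B 1 d p i)). intros i Hi. unfold fill.
      destruct (Nat.ltb_spec B i), (Nat.leb_spec i (B + 1)); try lia; simpl; ring.
  - rewrite <- Nat.add_1_r. apply fill_vanishes_from, HpB.
  - apply fill_agree_below.
  - intros x Hx HKx. rewrite HqB in Hx.
    pose proof (sqsum_le_coord _ _ (S B) (sqsum_le_tail_from_le N (S B) x _ ltac:(lia) (HN x HKx))) as Hc.
    unfold tail_from in Hc. rewrite Nat.ltb_irrefl, Hx in Hc. nra.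
Qed.

Lemma exit_along_fill A q d : stage q (S A) -> P d -> 0 < d ->
  exists k, stage (fill A k d q) (S (A + k)) /\
    exists y, X y /\ ~ U y /\ agree_below (S (A + k)) (fill A k d q) y /\
      sqsum_le (tail_from (S (A + k)) y) (d ^ 2).
Proof.
  intros [HXq [HUq Hq]] Hd Hd0.
  destruct (fill_exits_U A d q HUq Hd0) as [k [Hin Hout]].
  assert (HX : forall k, X (fill A k d q)).
  { intro l. apply (l2_valued_of_vanishes _ (S (A + l))); [apply fill_vanishes_from, Hq |].
    apply fill_coord; [apply HXq | exact Hd]. }
  exists k. split; [split; [apply HX | split; [exact Hin | apply fill_vanishes_from, Hq]] |].
  exists (fill A (S k) d q). split; [apply HX | split; [exact Hout | split]].
  - apply agree_below_sym, fill_S_agree_below.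
  - set (G := S (A + k)).
    replace (d ^ 2) with (tail_from G (fill A (S k) d q) G ^ 2)
      by (unfold tail_from; rewrite Nat.ltb_irrefl, fill_in_range by lia; reflexivity).
    apply sqsum_le_single. intros i Hi. unfold tail_from.
    destruct (Nat.ltb_spec i G); [reflexivity |].
    apply (fill_vanishes_from A (S k) d q Hq). lia.
Qed.

Definition refines (K : seqR -> Prop) (d : R) (p : seqR) (F : nat) (p' : seqR) (F' : nat) :=
  (F < F')%nat /\ agree_below F p' p /\ (forall x, agree_below F' x p' -> ~ K x) /\
  exists y, X y /\ ~ U y /\ agree_below F' p' y /\ sqsum_le (tail_from F' y) (d ^ 2).

Lemma refine_stage K d p F : compact_in X K -> P d -> 0 < d -> stage p F ->
  exists p' F', stage p' F' /\ refines K d p F p' F'.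
Proof.
  intros HK Hd Hd0 Hp.
  destruct (bump_stage K p F HK Hp) as [A [q [HFA [Hq [Hqp HqK]]]]].
  destruct (exit_along_fill A q d Hq Hd Hd0) as [k [Hp' Hy]].
  exists (fill A k d q), (S (A + k)).
  split; [exact Hp' | split; [lia | split; [| split; [| exact Hy]]]].
  - apply (agree_below_trans _ _ q).
    + apply (agree_below_le _ (S A)); [lia | apply fill_agree_below].
    + apply (agree_below_le _ A); [exact HFA | exact Hqp].
  - intros x Hx. apply HqK. rewrite (Hx A) by lia. apply fill_agree_below. lia.
Qed.

Lemma limit_of_stages (p : nat -> seqR) (F : nat -> nat) x :
  (forall j, stage (p j) (F j)) -> (forall j, (j <= F j)%nat) ->
  (forall j, agree_below (F j) x (p j)) -> X x.
Proof.
  intros Hp HF Hx. split.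
  - apply (sqsum_le_in_l2 x (M ^ 2)). intro n.
    rewrite (sum_eq _ (fun i => p (S n) i ^ 2))
      by (intros i Hi; rewrite (Hx (S n) i) by (specialize (HF (S n)); lia); reflexivity).
    apply (norm_le_sqsum_le _ _ (U_bounded _ (proj1 (proj2 (Hp (S n)))))).
  - intro i. rewrite (Hx (S i) i) by (specialize (HF (S i)); lia). apply (proj2 (proj1 (Hp (S i)))).
Qed.

Theorem boundary_not_sigma_compact : (exists x, U x) -> ~ sigma_compact_in X (boundary_in X U).
Proof.
  intros HU [K [HK HKb]].
  destruct (stage_exists HU) as [p0 [F0 H0]].
  destruct (dependent_choice_nat (fun s => stage (fst s) (snd s))
      (fun j s s' => refines (K j) (/ INR (S j)) (fst s) (snd s) (fst s') (snd s')) (p0, F0) H0)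
    as [st Hst].
  { intros j [p F] Hs.
    destruct (refine_stage (K j) _ p F (HK j) (P_inv_S j) (inv_INR_S_pos j) Hs) as [p' [F' H']].
    now exists (p', F'). }
  set (p := fun j => fst (st j)). set (F := fun j => snd (st j)).
  assert (Hstage : forall j, stage (p j) (F j)) by (intro j; apply Hst).
  assert (Href : forall j, refines (K j) (/ INR (S j)) (p j) (F j) (p (S j)) (F (S j)))
    by (intro j; apply Hst).
  destruct (coherent_limit p F) as [HF Hx]; [intro j; apply Href | intro j; apply Href |].
  set (x := fun i => p (S i) i) in Hx.
  assert (HXx : X x) by exact (limit_of_stages p F x Hstage HF Hx).
  assert (Hbd : boundary_in X U x).
  { apply boundary_in_of_tail_approx; [exact HXx | exact (proj1 HXx) | intro j ..].
    - destruct (Hstage j) as [HXp [HUp Hvan]].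
      exists (F j), (p j). do 3 (split; [auto |]).
      apply (sqsum_le_weaken _ 0); [| apply pow2_ge_0].
      apply sqsum_le_zero. intro i. unfold tail_from.
      destruct (Nat.ltb_spec i (F j)); [reflexivity | apply Hvan; lia].
    - destruct (Href j) as [_ [_ [_ [y [HXy [HUy [Hpy Hty]]]]]]].
      exists (F (S j)), y. split; [specialize (HF (S j)); lia |].
      split; [now split | split; [exact (agree_below_trans _ _ _ _ (Hx (S j)) Hpy) | exact Hty]]. }
  destruct (proj1 (HKb x) Hbd) as [j Hj].
  destruct (Href j) as [_ [_ [HnotK _]]]. exact (HnotK x (Hx (S j)) Hj).
Qed.

End Construction.

Lemma Q2R_inv_INR_S n : exists q : Q, / INR (S n) = Q2R q.
Proof.
  exists (Qmake 1 (Pos.of_succ_nat n)).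
  rewrite (INR_IZR_INZ (S n)), Nat2Z.inj_succ, <- Zpos_P_of_succ_nat.
  unfold Q2R. simpl. lra.
Qed.

Theorem corollary4p9 :
  forall X : seqR -> Prop, (X = Erdos \/ X = ErdosC) ->
  forall U : seqR -> Prop,
    open_in X U -> (exists x, U x) -> l2_bounded U ->
    ~ sigma_compact_in X (boundary_in X U).
Proof.
  intros X HX U HU Hne [M HM].
  destruct HX as [-> | ->].
  - apply (boundary_not_sigma_compact (fun v => exists q : Q, v = Q2R q)) with (M := M); auto.
    + exists 0%Q. unfold Q2R. simpl. lra.
    + exact Q2R_inv_INR_S.
  - apply (boundary_not_sigma_compact (fun v => v = 0 \/ exists n, (1 <= n)%nat /\ v = / INR n))
      with (M := M); auto.
    intro n. right. exists (S n). split; [lia | reflexivity].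
Qed.
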